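(* Let $\mathcal{L}^*\supseteq\mathcal{L}$ be relational languages and let $\mathbf{K}$ be a Fraïssé $\mathcal{L}$-structure. Suppose $\mathbf{K}^*$ is a recurrent, precompact $\mathcal{L}^*$-expansion of $\mathbf{K}$ such that $\mathbf{K}^*\to(\mathbf{K}^* )^{\mathbf{A}^*}_2$ for every finite substructure $\mathbf{A}^*\subseteq\mathbf{K}^*$. Then $\mathbf{K}$ has finite big Ramsey degrees, and $\mathbf{K}^*$ is a (recurrent) big Ramsey structure for $\mathbf{K}$; in fact $\mathrm{BRD}(\mathbf{A},\mathbf{K})=|\mathbf{K}^*(\mathbf{A})|$ for every finite $\mathbf{A}\subseteq\mathbf{K}$.
   Context: For structures $\mathbf{A},\mathbf{B}$, $\mathrm{Emb}(\mathbf{A},\mathbf{B})$ is the set of embeddings. For structures $\mathbf{A}\le\mathbf{B}\le\mathbf{C}$, $\mathbf{C}\to(\mathbf{B})^{\mathbf{A}}_2$ means: for every coloring $\chi:\mathrm{Emb}(\mathbf{A},\mathbf{C})\to 2$ there is $g\in\mathrm{Emb}(\mathbf{B},\mathbf{C})$ with $\chi$ constant on $g\circ\mathrm{Emb}(\mathbf{A},\mathbf{B})$. An $\mathcal{L}^*$-expansion $\mathbf{M}^*$ of an $\mathcal{L}$-structure $\mathbf{M}$ is an $\mathcal{L}^*$-structure on the same set whose $\mathcal{L}$-reduct is $\mathbf{M}$. For finite $\mathbf{B}\le\mathbf{M}$, $\mathbf{M}^*(\mathbf{B})$ is the set of $\mathcal{L}^*$-expansions $\mathbf{B}^*$ of $\mathbf{B}$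 that embed into $\mathbf{M}^*$; $\mathbf{M}^*$ is precompact if $\mathbf{M}^*(\mathbf{B})$ is finite for every finite $\mathbf{B}\le\mathbf{M}$. For $f\in\mathrm{Emb}(\mathbf{B},\mathbf{M})$, $\mathbf{M}^*\cdot f$ is the unique $\mathbf{B}^*\in\mathbf{M}^*(\mathbf{B})$ with $f\in\mathrm{Emb}(\mathbf{B}^*,\mathbf{M}^* )$; for $\eta\in\mathrm{Emb}(\mathbf{M},\mathbf{M})$, $\mathbf{M}^*\cdot\eta$ is the expansion of $\mathbf{M}$ pulled back along $\eta$. $\mathbf{M}^*$ is recurrent if $\mathrm{Emb}(\mathbf{M}^*,\mathbf{M}^*\cdot\eta)\ne\emptyset$ for every $\eta\in\mathrm{Emb}(\mathbf{M},\mathbf{M})$. For finite $\mathbf{A}\le\mathbf{K}$, the big Ramsey degree $\mathrm{BRD}(\mathbf{A},\mathbf{K})$ is the least $t$ (if it exists) such that for every $r>t$ and $\chi:\mathrm{Emb}(\mathbf{A},\mathbf{K})\to r$ there is $g\in\mathrm{Emb}(\mathbf{K},\mathbf{K})$ with $|\chi[g\circ\mathrm{Emb}(\mathbf{A},\mathbf{K})]|\le t$; $\mathbf{K}$ has finite big Ramsey degrees if this is finite for all finite $\mathbf{A}\le\mathbf{K}$. A big Ramsey structure for $\mathbf{K}$ is an expansion $\mathbf{K}^*$ such that for every finite $\mathbf{A}\le\mathbf{K}$, $|\mathbf{K}^*(\mathbf{A})|=\mathrm{BRD}(\mathbf{A},\mathbf{K})$ and for every $g\in\mathrm{Emb}(\mathbf{K},\mathbf{K})$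 the coloring $f\mapsto\mathbf{K}^*\cdot f$ takes all $|\mathbf{K}^*(\mathbf{A})|$ values on $g\circ\mathrm{Emb}(\mathbf{A},\mathbf{K})$. *)

From Stdlib Require Import List Arith Vectors.Fin.


Record lang := Lang { sym : Type; arity : sym -> nat }.
Arguments arity {l} _.

(** A language L* ⊇ L is presented as L together with the extra symbols E:
    the symbols of L* are those of L plus those of E. *)
Definition Lsum (L E : lang) : lang :=
  Lang (sym L + sym E) (fun s : sym L + sym E =>
          match s with inl s => arity s | inr e => arity e end).

Record structure (L : lang) := Struct {
  carrier :> Type;
  rel : forall s : sym L, (Fin.t (arity s) -> carrier) -> Prop }.
Arguments Struct {L} carrier rel.
Arguments rel {L} _ _ _.
Arguments carrier {L} _.

Definition is_emb {L} (A B : structure L) (f : A -> B) : Prop :=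
  (forall x y, f x = f y -> x = y) /\
  (forall (s : sym L) (x : Fin.t (arity s) -> A),
      rel A s x <-> rel B s (fun i => f (x i))).

Definition Emb {L} (A B : structure L) := { f : A -> B | is_emb A B f }.

Definition is_finite {L} (A : structure L) : Prop :=
  exists l : list (carrier A), forall x, In x l.

(** A finite substructure of K (up to isomorphism): a finite structure
    that embeds into K. *)
Definition finite_sub {L} (A K : structure L) : Prop :=
  is_finite A /\ inhabited (Emb A K).

Definition countably_infinite (T : Type) : Prop :=
  exists e : nat -> T, (forall m n, e m = e n -> m = n) /\ (forall x, exists n, e n = x).

Definition is_aut {L} (K : structure L) (s : K -> K) : Prop :=
  is_emb K K s /\ (forall y, exists x, s x = y).

(** Ultrahomogeneity: every isomorphism between finite substructures
    (given as a map p that is a partial isomorphism on the finite set S)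
    extends to an automorphism. *)
Definition ultrahomogeneous {L} (K : structure L) : Prop :=
  forall (S : K -> Prop) (p : K -> K),
    (exists l, forall x, S x -> In x l) ->
    (forall x y, S x -> S y -> p x = p y -> x = y) ->
    (forall (s : sym L) (x : Fin.t (arity s) -> K), (forall i, S (x i)) ->
        (rel K s x <-> rel K s (fun i => p (x i)))) ->
    exists sg, is_aut K sg /\ forall x, S x -> sg x = p x.

Definition Fraisse {L} (K : structure L) : Prop :=
  countably_infinite (carrier K) /\ ultrahomogeneous K.

(** Expansions.  An L*-expansion of an L-structure M is given by an
    interpretation of the extra symbols E on the carrier of M; its L-reduct
    is M by construction. *)
Definition expansion {L} (E : lang) (M : structure L) :=
  forall e : sym E, (Fin.t (arity e) -> M) -> Prop.

Definition expand {L E} (M : structure L) (X : expansion E M) : structure (Lsum L E) :=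
  Struct (carrier M)
    (fun s => match s as s0 return (Fin.t (arity (l:=Lsum L E) s0) -> M) -> Prop with
              | inl s => rel M s
              | inr e => X e end).

Definition exps_in {L E} (M : structure L) (X : expansion E M) (B : structure L)
  (Y : expansion E B) : Prop :=
  inhabited (Emb (expand B Y) (expand M X)).

Definition pull {L E} (B M : structure L) (X : expansion E M) (f : B -> M)
  : expansion E B := fun e x => X e (fun i => f (x i)).

Definition set_finite {T} (P : T -> Prop) : Prop :=
  exists l : list T, forall x, P x -> In x l.

Definition has_card {T} (P : T -> Prop) (n : nat) : Prop :=
  exists l : list T, NoDup l /\ length l = n /\ forall x, P x <-> In x l.

Definition card_le {T} (P : T -> Prop) (t : nat) : Prop :=
  exists l : list T, length l <= t /\ forall x, P x -> In x l.

Definition precompact {L E} (M : structure L) (X : expansion E M) : Prop :=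
  forall B : structure L, finite_sub B M -> set_finite (exps_in M X B).

Definition recurrent {L E} (M : structure L) (X : expansion E M) : Prop :=
  forall eta : Emb M M,
    inhabited (Emb (expand M X) (expand M (pull M M X (proj1_sig eta)))).

Definition arrow2 {L} (C B A : structure L) : Prop :=
  forall chi : Emb A C -> bool,
    exists (g : Emb B C) (c : bool),
      forall (f : Emb A B) (h : Emb A C),
        (forall a, proj1_sig h a = proj1_sig g (proj1_sig f a)) -> chi h = c.

Definition brd_bound {L} (A K : structure L) (t : nat) : Prop :=
  forall r, t < r -> forall chi : Emb A K -> Fin.t r,
    exists g : Emb K K,
      card_le (fun c => exists f h : Emb A K,
                  (forall a, proj1_sig h a = proj1_sig g (proj1_sig f a)) /\
                  c = chi h) t.

Definition BRD {L} (A K : structure L) (t : nat) : Prop :=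
  brd_bound A K t /\ forall t', brd_bound A K t' -> t <= t'.

Definition finite_BRD {L} (K : structure L) : Prop :=
  forall A : structure L, finite_sub A K -> exists t, BRD A K t.

Definition big_ramsey_structure {L E} (K : structure L) (X : expansion E K) : Prop :=
  forall A : structure L, finite_sub A K ->
    exists n, has_card (exps_in K X A) n /\ BRD A K n /\
      forall g : Emb K K, forall Y : expansion E A, exps_in K X A Y ->
        exists f : Emb A K,
          pull A K X (fun a => proj1_sig g (proj1_sig f a)) = Y.

From Stdlib Require Import List Arith Vectors.Fin.
From Stdlib Require Import ClassicalEpsilon FunctionalExtensionality ProofIrrelevance
  PropExtensionality Lia.

(** Colour the embeddings of a finite [A] into [K] by their type [K*·f].
    Upper bound: the 2-colour self-arrow of [K*] for [A*] iterates to finitely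
    many colours, so for each type [A*] some copy of [K*] makes a given colouring
    constant on the embeddings of type [A*]; embeddings of [K*] into itself
    preserve types, so composing these copies over the finitely many types
    leaves at most [|K*(A)|] colours.  Lower bound: by recurrence every copy
    of [K] realizes every type, so the colouring by type keeps all
    [|K*(A)|] colours in every copy; this is also what makes [K*] a big
    Ramsey structure. *)

Lemma fin_enum (r : nat) : exists l : list (Fin.t r), forall i, In i l.
Proof.
  induction r as [|r [l Hl]].
  - exists nil; intros i; apply Fin.case0, i.
  - exists (Fin.F1 :: map Fin.FS l); intros i.
    pattern i; apply Fin.caseS'; [left; reflexivity|].
    intros j; right; apply in_map, Hl.
Qed.

Lemma set_finite_enum {T : Type} (P : T -> Prop) :
  set_finite P -> exists l, NoDup l /\ forall x, P x <-> In x l.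
Proof.
  intros [l0 Hl0].
  pose (p x := if excluded_middle_informative (P x) then true else false).
  assert (eq_dec : forall x y : T, {x = y} + {x <> y})
    by (intros; apply excluded_middle_informative).
  exists (nodup eq_dec (filter p l0)); split; [apply NoDup_nodup|].
  intros x; rewrite nodup_In, filter_In; unfold p.
  destruct (excluded_middle_informative (P x)) as [Px|nPx].
  - split; auto.
  - split; [contradiction | intros [_ H]; discriminate H].
Qed.

Lemma In_nth_fin {T : Type} (l : list T) (d y : T) :
  In y l -> {i : Fin.t (length l) | nth (proj1_sig (Fin.to_nat i)) l d = y}.
Proof.
  intros Hy; apply constructive_indefinite_description.
  destruct (In_nth l y d Hy) as [n [Hn Hnth]].
  exists (Fin.of_nat_lt Hn); rewrite Fin.to_nat_of_nat; exact Hnth.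
Qed.

Section Embeddings.
Context {L : lang}.

Lemma is_emb_id (A : structure L) : is_emb A A (fun a => a).
Proof. split; [auto | intros; tauto]. Qed.

Lemma is_emb_comp (A B C : structure L) (f : A -> B) (g : B -> C) :
  is_emb A B f -> is_emb B C g -> is_emb A C (fun a => g (f a)).
Proof.
  intros [f_inj f_rel] [g_inj g_rel]; split.
  - intros x y H; apply f_inj, g_inj, H.
  - intros s x; rewrite (f_rel s x); exact (g_rel s (fun i => f (x i))).
Qed.

Definition id_emb (A : structure L) : Emb A A := exist _ _ (is_emb_id A).

Definition comp_emb {A B C : structure L} (g : Emb B C) (f : Emb A B) : Emb A C :=
  exist _ _ (is_emb_comp A B C _ _ (proj2_sig f) (proj2_sig g)).

Lemma emb_eq {A B : structure L} (h h' : Emb A B) :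
  (forall a, proj1_sig h a = proj1_sig h' a) -> h = h'.
Proof.
  destruct h as [h Hh], h' as [h' Hh']; simpl; intros Heq.
  assert (h = h') as <- by (apply functional_extensionality, Heq).
  f_equal; apply proof_irrelevance.
Qed.

Lemma comp_embA {A B C D : structure L} (h : Emb C D) (g : Emb B C) (f : Emb A B) :
  comp_emb (comp_emb h g) f = comp_emb h (comp_emb g f).
Proof. apply emb_eq; reflexivity. Qed.

(* Iterating the 2-colour arrow peels off one colour at a time: either the copy
   found is monochromatic, or it avoids the colour [c]. *)
Lemma self_arrow2_finite_colours (A C : structure L) (T : Type) (lc : list T)
  (chi : Emb A C -> T) :
  arrow2 C C A -> (forall h, In (chi h) lc) ->
  exists g : Emb C C, forall f f' : Emb A C, chi (comp_emb g f) = chi (comp_emb g f').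
Proof.
  intros Harrow; revert chi; induction lc as [|c lc IH]; intros chi Hchi.
  - exists (id_emb C); intros f; destruct (Hchi f).
  - destruct (Harrow (fun h => if excluded_middle_informative (chi h = c) then true else false))
      as [g1 [b Hb]].
    assert (Hcol : forall f,
      (if excluded_middle_informative (chi (comp_emb g1 f) = c) then true else false) = b)
      by (intros f; exact (Hb f (comp_emb g1 f) (fun a => eq_refl))).
    destruct b.
    + exists g1; intros f f'.
      pose proof (Hcol f) as Hf; pose proof (Hcol f') as Hf'.
      destruct excluded_middle_informative; destruct excluded_middle_informative;
        congruence.
    + destruct (IH (fun f => chi (comp_emb g1 f))) as [g2 Hg2].
      { intros f; specialize (Hcol f).
        destruct (Hchi (comp_emb g1 f)) as [Hc|Hin]; [|exact Hin].
        destruct excluded_middle_informative; [discriminate | congruence]. }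
      exists (comp_emb g1 g2); intros f f'; rewrite !comp_embA; apply Hg2.
Qed.

End Embeddings.

Section Expansions.
Context {L E : lang}.

Definition emb_type {A B : structure L} (Z : expansion E B) (f : Emb A B) : expansion E A :=
  pull A B Z (proj1_sig f).

Lemma is_emb_expand {A B : structure L} (Y : expansion E A) (Z : expansion E B) (f : A -> B) :
  is_emb (expand A Y) (expand B Z) f <-> is_emb A B f /\ pull A B Z f = Y.
Proof.
  assert (Hpull : pull A B Z f = Y <-> forall e x, Y e x <-> Z e (fun i => f (x i))).
  { split.
    - intros <- e x; unfold pull; tauto.
    - intros H; apply functional_extensionality_dep; intros e;
        apply functional_extensionality; intros x;
        apply propositional_extensionality; symmetry; apply H. }
  rewrite Hpull; split.
  - intros [f_inj f_rel]; split; [split|].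
    + exact f_inj.
    + intros s x; exact (f_rel (inl s) x).
    + intros e x; exact (f_rel (inr e) x).
  - intros [[f_inj f_rel] f_ext]; split; [exact f_inj|].
    intros [s|e] x; [exact (f_rel s x) | exact (f_ext e x)].
Qed.

Definition reduct_emb {A B : structure L} {Y : expansion E A} {Z : expansion E B}
  (h : Emb (expand A Y) (expand B Z)) : Emb A B :=
  exist _ (proj1_sig h) (proj1 (proj1 (is_emb_expand Y Z _) (proj2_sig h))).

Lemma emb_type_reduct {A B : structure L} {Y : expansion E A} {Z : expansion E B}
  (h : Emb (expand A Y) (expand B Z)) : emb_type Z (reduct_emb h) = Y.
Proof. exact (proj2 (proj1 (is_emb_expand Y Z _) (proj2_sig h))). Qed.

Lemma reduct_emb_of_type {A B : structure L} {Y : expansion E A} {Z : expansion E B}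
  (f : Emb A B) :
  emb_type Z f = Y -> exists h : Emb (expand A Y) (expand B Z), reduct_emb h = f.
Proof.
  intros Hf.
  exists (exist _ (proj1_sig f) (proj2 (is_emb_expand Y Z _) (conj (proj2_sig f) Hf))).
  apply emb_eq; reflexivity.
Qed.

Lemma exps_in_emb_type {A B : structure L} (Z : expansion E B) (Y : expansion E A) :
  exps_in B Z A Y <-> exists f : Emb A B, emb_type Z f = Y.
Proof.
  split.
  - intros [h]; exists (reduct_emb h); apply emb_type_reduct.
  - intros [f Hf]; destruct (reduct_emb_of_type f Hf) as [h _]; exact (inhabits h).
Qed.

Lemma reduct_emb_comp {A B C : structure L} {Y : expansion E A} {Z : expansion E B}
  {W : expansion E C} (g : Emb (expand B Z) (expand C W)) (h : Emb (expand A Y) (expand B Z)) :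
  comp_emb (reduct_emb g) (reduct_emb h) = reduct_emb (comp_emb g h).
Proof. apply emb_eq; reflexivity. Qed.

Lemma emb_type_comp {A B C : structure L} {Z : expansion E B} {W : expansion E C}
  (g : Emb (expand B Z) (expand C W)) (f : Emb A B) :
  emb_type W (comp_emb (reduct_emb g) f) = emb_type Z f.
Proof.
  transitivity (pull A B (emb_type W (reduct_emb g)) (proj1_sig f)); [reflexivity|].
  rewrite emb_type_reduct; reflexivity.
Qed.

End Expansions.

Section BigRamseyDegrees.
Context {L E : lang} (K : structure L) (X : expansion E K).

Lemma arrow2_type_monochromatic (A : structure L) (Y : expansion E A) (T : Type)
  (lc : list T) (chi : Emb A K -> T) :
  arrow2 (expand K X) (expand K X) (expand A Y) -> (forall f, In (chi f) lc) ->
  exists g : Emb (expand K X) (expand K X), forall f f' : Emb A K,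
    emb_type X f = Y -> emb_type X f' = Y ->
    chi (comp_emb (reduct_emb g) f) = chi (comp_emb (reduct_emb g) f').
Proof.
  intros Harrow Hchi.
  destruct (self_arrow2_finite_colours _ _ T lc (fun h => chi (reduct_emb h)) Harrow
              (fun h => Hchi _)) as [g Hg].
  exists g; intros f f' Hf Hf'.
  destruct (reduct_emb_of_type f Hf) as [h <-], (reduct_emb_of_type f' Hf') as [h' <-].
  rewrite !reduct_emb_comp; apply Hg.
Qed.

Lemma arrow2_types_monochromatic (A : structure L) (T : Type) (lc : list T)
  (chi : Emb A K -> T) (ls : list (expansion E A)) :
  (forall Y, In Y ls -> arrow2 (expand K X) (expand K X) (expand A Y)) ->
  (forall f, In (chi f) lc) ->
  exists g : Emb (expand K X) (expand K X), forall f f' : Emb A K,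
    In (emb_type X f) ls -> emb_type X f' = emb_type X f ->
    chi (comp_emb (reduct_emb g) f) = chi (comp_emb (reduct_emb g) f').
Proof.
  revert chi; induction ls as [|Y ls IH]; intros chi Harrow Hchi.
  - exists (id_emb _); intros f f' [].
  - destruct (arrow2_type_monochromatic A Y T lc chi (Harrow Y (or_introl eq_refl)) Hchi)
      as [g1 Hg1].
    destruct (IH (fun f => chi (comp_emb (reduct_emb g1) f))
                 (fun Y' H => Harrow Y' (or_intror H)) (fun f => Hchi _)) as [g2 Hg2].
    exists (comp_emb g1 g2); intros f f' Hf Hf'.
    rewrite <- !reduct_emb_comp, !comp_embA.
    destruct Hf as [-> | Hf]; [|exact (Hg2 f f' Hf Hf')].
    apply Hg1; rewrite emb_type_comp; [reflexivity | exact Hf'].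
Qed.

Lemma brd_bound_types (A : structure L) (l : list (expansion E A)) :
  is_finite A -> inhabited (Emb A K) ->
  (forall Astar, finite_sub Astar (expand K X) -> arrow2 (expand K X) (expand K X) Astar) ->
  (forall Y, exps_in K X A Y <-> In Y l) ->
  brd_bound A K (length l).
Proof.
  intros HA [f0] Harrow Hl r _ chi.
  destruct (fin_enum r) as [lc Hlc].
  destruct (arrow2_types_monochromatic A _ lc chi l) as [g Hg].
  { intros Y HY; apply Harrow; split; [exact HA | apply Hl, HY]. }
  { intros f; apply Hlc. }
  pose (rep Y := epsilon (inhabits f0) (fun f : Emb A K => emb_type X f = Y)).
  exists (reduct_emb g), (map (fun Y => chi (comp_emb (reduct_emb g) (rep Y))) l).
  split; [rewrite length_map; reflexivity|].
  intros c [f [h [Hh ->]]].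
  replace h with (comp_emb (reduct_emb g) f) by (apply emb_eq; intros a; symmetry; apply Hh).
  assert (Hf : In (emb_type X f) l) by (apply Hl, exps_in_emb_type; eauto).
  assert (Hrep : emb_type X (rep (emb_type X f)) = emb_type X f)
    by (apply epsilon_spec; eauto).
  rewrite (Hg f _ Hf Hrep).
  exact (in_map (fun Y => chi (comp_emb (reduct_emb g) (rep Y))) _ _ Hf).
Qed.

Lemma recurrent_realizes_types (A : structure L) (Y : expansion E A) :
  recurrent K X -> exps_in K X A Y ->
  forall g : Emb K K, exists f : Emb A K, emb_type X (comp_emb g f) = Y.
Proof.
  intros Hrec HY g.
  destruct (Hrec g) as [eta].
  destruct (proj1 (exps_in_emb_type X Y) HY) as [f Hf].
  exists (comp_emb (reduct_emb eta) f).
  transitivity (emb_type (pull K K X (proj1_sig g)) (comp_emb (reduct_emb eta) f));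
    [reflexivity|].
  rewrite emb_type_comp; exact Hf.
Qed.

(* Colouring each embedding by the position of its type in [l] needs [length l]
   colours, and recurrence forces all of them into every copy of [K]. *)
Lemma brd_bound_ge_types (A : structure L) (l : list (expansion E A)) (t : nat) :
  recurrent K X -> NoDup l -> (forall Y, exps_in K X A Y <-> In Y l) ->
  brd_bound A K t -> length l <= t.
Proof.
  intros Hrec Hnd Hl Ht.
  destruct (le_lt_dec (length l) t) as [|Hlt]; [assumption | exfalso].
  pose (d := fun (e : sym E) (_ : Fin.t (arity e) -> A) => False).
  assert (Hin : forall f : Emb A K, In (emb_type X f) l)
    by (intros f; apply Hl, exps_in_emb_type; eauto).
  pose (idx := fun i : Fin.t (length l) => nth (proj1_sig (Fin.to_nat i)) l d).
  pose (chi f := proj1_sig (In_nth_fin l d _ (Hin f))).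
  destruct (Ht (length l) Hlt chi) as [g [lc [Hlen Hlc]]].
  assert (Hincl : incl l (map idx lc)).
  { intros Y HY.
    destruct (recurrent_realizes_types A Y Hrec (proj2 (Hl Y) HY) g) as [f <-].
    rewrite <- (proj2_sig (In_nth_fin l d _ (Hin (comp_emb g f)))).
    apply (in_map idx), Hlc.
    exists f, (comp_emb g f); split; reflexivity. }
  pose proof (NoDup_incl_length Hnd Hincl) as Hle.
  rewrite length_map in Hle; lia.
Qed.

Lemma BRD_card_exps_in (A : structure L) :
  recurrent K X -> precompact K X ->
  (forall Astar, finite_sub Astar (expand K X) -> arrow2 (expand K X) (expand K X) Astar) ->
  finite_sub A K -> exists n, has_card (exps_in K X A) n /\ BRD A K n.
Proof.
  intros Hrec Hpc Harrow [HA HAK].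
  destruct (set_finite_enum _ (Hpc A (conj HA HAK))) as [l [Hnd Hl]].
  exists (length l); split; [exists l; auto|split].
  - exact (brd_bound_types A l HA HAK Harrow Hl).
  - intros t Ht; exact (brd_bound_ge_types A l t Hrec Hnd Hl Ht).
Qed.

End BigRamseyDegrees.

Theorem proposition2p8 (L E : lang) (K : structure L) (X : expansion E K) :
  Fraisse K ->
  recurrent K X ->
  precompact K X ->
  (forall Astar : structure (Lsum L E), finite_sub Astar (expand K X) ->
     arrow2 (expand K X) (expand K X) Astar) ->
  finite_BRD K /\ big_ramsey_structure K X /\ recurrent K X /\
  (forall A : structure L, finite_sub A K ->
     exists n, has_card (exps_in K X A) n /\ BRD A K n).
Proof.
  intros _ Hrec Hpc Harrow.
  pose proof (fun A => BRD_card_exps_in K X A Hrec Hpc Harrow) as Hbrd.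
  split; [|split; [|split; [exact Hrec | exact Hbrd]]].
  - intros A HA; destruct (Hbrd A HA) as [n [_ Hn]]; eauto.
  - intros A HA; destruct (Hbrd A HA) as [n [Hcard Hn]].
    exists n; split; [exact Hcard | split; [exact Hn|]].
    intros g Y HY; exact (recurrent_realizes_types K X A Y Hrec HY g).
Qed.
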